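(* Let $f : A \longrightarrow B$ be any derivation of the cut-free proof system for $\mathbf{NL}_{\diamond}$ described in the context (axioms, residuation rules and their inverses, monotonicity rules, and the rule-form extraction rules). Then the linear map $[\![ f ]\!] : [\![ A ]\!] \to [\![ B ]\!]$ obtained from the compact closed interpretation of $f$ coincides with the linear map $G(f) : [\![ A ]\!] \to [\![ B ]\!]$ given by the generalised Kronecker delta annotating $f$; i.e. $[\![ f ]\!] = G(f)$.
   Context: \textbf{Syntax.} Formulas of $\mathbf{NL}_{\diamond}$ are built from atoms by $A ::= p \mid \Diamond A \mid \Box A \mid A\otimes A \mid A/A \mid A\backslash A$. Derivations of arrows $A\longrightarrow B$ are built by the rules: axioms $1_A : A\longrightarrow A$; residuation: from $f:\Diamond A\to B$ infer $\triangledown f: A\to\Box B$; from $f:A\otimes B\to C$ infer $\rhd f : A\to C/B$ and $\lhd f: B\to A\backslash C$; and the inverses: from $g:A\to \Box B$ infer $\triangledown^{-1}g:\Diamond A\to B$; from $g:A\to C/B$ infer $\rhd^{-1}g: A\otimes B\to C$; from $g: B\to A\backslash C$ infer $\lhd^{-1}g : A\otimes B\to C$; monotonicity: from $f:A\to B$ infer $\Diamond f:\Diamond A\to\Diamond B$ and $\Box f:\Box A\to\Box B$; from $f:A\to B$, $g:C\to D$ infer $f\otimes g: A\otimes C\to B\otimes D$, $f/g : A/D\to B/C$, $f\backslash g: B\backslash C\to A\backslash D$; extraction rules: from $f:(\Diamond A\otimes B)\otimes C\to D$ infer $\widehat\alpha^l_\diamond f:\Diamond A\otimes(B\otimes C)\to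 D$; from $f: B\otimes(\Diamond A\otimes C)\to D$ infer $\widehat\sigma^l_\diamond f:\Diamond A\otimes(B\otimes C)\to D$; from $f: A\otimes(B\otimes\Diamond C)\to D$ infer $\widehat\alpha^r_\diamond f:(A\otimes B)\otimes\Diamond C\to D$; from $f:(A\otimes\Diamond C)\otimes B\to D$ infer $\widehat\sigma^r_\diamond f:(A\otimes B)\otimes\Diamond C\to D$. \textbf{Interpretation $[\![\cdot]\!]$.} Work in finite-dimensional real vector spaces with fixed bases, identifying $V^*$ with $V$; $\epsilon_V:V\otimes V\to\mathbb R$, $\sum v_{ij}e_i\otimes e_j\mapsto\sum_i v_{ii}$, and $\eta_V:\mathbb R\to V\otimes V$, $\lambda\mapsto\sum_i\lambda\, e_i\otimes e_i$; $\alpha$ and $\sigma$ denote the standard associativity and symmetry isomorphisms. Each atom is sent to a vector space; $[\![\Diamond A]\!]=[\![\Box A]\!]=[\![A]\!]$, $[\![A\otimes B]\!]=[\![A]\!]\otimes[\![B]\!]$, $[\![A/B]\!]=[\![A]\!]\otimes[\![B]\!]^*$, $[\![A\backslash B]\!]=[\![A]\!]^*\otimes[\![B]\!]$. On derivations: $[\![1_A]\!]=1_{[\![A]\!]}$; $[\![\triangledown f]\!]=[\![\triangledown^{-1}f]\!]=[\![\Diamond f]\!]=[\![\Box f]\!]=[\![f]\!]$; $[\![\rhd f]\!]=([\![f]\!]\otimes 1)\circ(1_{[\![A]\!]}\otimes\eta_{[\![B]\!]})$; $[\![\lhd f]\!]=(1\otimes[\![f]\!])\circ(\eta_{[\![A]\!]}\otimes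 1_{[\![B]\!]})$; $[\![\rhd^{-1}g]\!]=(1_{[\![C]\!]}\otimes\epsilon_{[\![B]\!]})\circ([\![g]\!]\otimes 1_{[\![B]\!]})$; $[\![\lhd^{-1}h]\!]=(\epsilon_{[\![A]\!]}\otimes 1_{[\![C]\!]})\circ(1_{[\![A]\!]}\otimes[\![h]\!])$; $[\![f\otimes g]\!]=[\![f]\!]\otimes[\![g]\!]$; $[\![f/g]\!]=(1_{[\![B]\!]\otimes[\![C]\!]}\otimes\epsilon_{[\![D]\!]})\circ(1_{[\![B]\!]\otimes[\![C]\!]}\otimes[\![g]\!]\otimes1_{[\![D]\!]})\circ([\![f]\!]\otimes\eta_{[\![C]\!]}\otimes 1_{[\![D]\!]})$; $[\![f\backslash g]\!]=(\epsilon_{[\![B]\!]}\otimes 1_{[\![A]\!]\otimes[\![D]\!]})\circ(1_{[\![B]\!]}\otimes[\![f]\!]\otimes 1_{[\![A]\!]\otimes[\![D]\!]})\circ(1_{[\![B]\!]}\otimes\eta_{[\![A]\!]}\otimes[\![g]\!])$; $[\![\widehat\alpha^{l}_\diamond f]\!]=[\![f]\!]\circ\alpha$, $[\![\widehat\sigma^l_\diamond f]\!]=[\![f]\!]\circ\alpha^{-1}\circ(\sigma\otimes 1)\circ\alpha$, and symmetrically for the rightward rules. \textbf{Generalised Kronecker deltas.} For index lists $I=(i_1,\dots,i_n)$, $J=(j_1,\dots,j_n)$, $\delta^I_J=1$ if $i_k=j_k$ for all $k$ and $0$ otherwise; $\delta^I_J\delta^K_L=\delta^{IK}_{JL}$ (concatenation).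 Einstein summation is used: repeated indices are summed. A delta $\delta^I_J : X_M\to Y_N$ with $I+J$ a permutation of $M+N$ denotes the linear map sending a tensor $x_M\in X$ to the tensor $y_N=\delta^I_J x_M\in Y$. \textbf{Annotation $G(f)$.} Each derivation is annotated by a delta, with each formula occurrence in its endsequent carrying an index list of length equal to the rank of its interpretation: an axiom $A_I\to A_J$ (fresh lists) is annotated $\delta^I_J$; the residuation rules, their inverses, the $\Diamond,\Box$ monotonicity rules and the four extraction rules keep the same delta, the index lists of subformula occurrences simply moving with those occurrences (e.g. from $\delta^I_J: A\otimes B\to C$ one gets $\delta^I_J: B\to A\otimes C$ for $\lhd$, with $A/B$ read as $A\otimes B$ and $A\backslash B$ as $A\otimes B$ at the level of spaces); for the binary monotonicity rules, from $\delta^I_J : A_I\to B_J$ and $\delta^K_L : C_K\to D_L$ one gets $\delta^{IK}_{JL}: A_I\otimes C_K\to B_J\otimes D_L$ for $\otimes$, $\delta^{IK}_{JL}: A_I\otimes D_L\to B_J\otimes C_K$ for $/$, and $\delta^{IK}_{JL}: B_J\otimes C_K\to A_I\otimes D_L$ for $\backslash$. $G(f)$ is the linear map $[\![A]\!]\to[\![B]\!]$ denoted by the resulting annotated delta. *)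

From mathcomp Require Import all_boot all_order all_algebra.
From mathcomp Require Import reals.
Import GRing.Theory Num.Theory.
Local Open Scope ring_scope.

Inductive fml (atom : Type) : Type :=
| Atom   : atom -> fml atom
| Dia    : fml atom -> fml atom
| Box    : fml atom -> fml atom
| Tens   : fml atom -> fml atom -> fml atom
| Slash  : fml atom -> fml atom -> fml atom   (* A / B *)
| Bslash : fml atom -> fml atom -> fml atom.  (* A \ B *)
Arguments Atom {atom}. Arguments Dia {atom}. Arguments Box {atom}.
Arguments Tens {atom}. Arguments Slash {atom}. Arguments Bslash {atom}.

Section Deriv.
Variable atom : Type.
Inductive nld : fml atom -> fml atom -> Type :=
| ax (A : fml atom) : nld A A
| dres (A B : fml atom) :
    nld (Dia A) B -> nld A (Box B)
| rres (A B C : fml atom) :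
    nld (Tens A B) C -> nld A (Slash C B)
| lres (A B C : fml atom) :
    nld (Tens A B) C -> nld B (Bslash A C)
| dres_inv (A B : fml atom) :
    nld A (Box B) -> nld (Dia A) B
| rres_inv (A B C : fml atom) :
    nld A (Slash C B) -> nld (Tens A B) C
| lres_inv (A B C : fml atom) :
    nld B (Bslash A C) -> nld (Tens A B) C
| mdia (A B : fml atom) : nld A B -> nld (Dia A) (Dia B)
| mbox (A B : fml atom) : nld A B -> nld (Box A) (Box B)
| mtens (A B C D : fml atom) :
    nld A B -> nld C D -> nld (Tens A C) (Tens B D)
| mslash (A B C D : fml atom) :
    nld A B -> nld C D -> nld (Slash A D) (Slash B C)
| mbslash (A B C D : fml atom) :
    nld A B -> nld C D -> nld (Bslash B C) (Bslash A D)
| alpha_l (A B C D : fml atom) :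
    nld (Tens (Tens (Dia A) B) C) D -> nld (Tens (Dia A) (Tens B C)) D
| sigma_l (A B C D : fml atom) :
    nld (Tens B (Tens (Dia A) C)) D -> nld (Tens (Dia A) (Tens B C)) D
| alpha_r (A B C D : fml atom) :
    nld (Tens A (Tens B (Dia C))) D -> nld (Tens (Tens A B) (Dia C)) D
| sigma_r (A B C D : fml atom) :
    nld (Tens (Tens A (Dia C)) B) D -> nld (Tens (Tens A B) (Dia C)) D.
End Deriv.
Arguments nld {atom}.
Arguments ax {atom}.
Arguments dres {atom}. Arguments rres {atom}. Arguments lres {atom}.
Arguments dres_inv {atom}. Arguments rres_inv {atom}. Arguments lres_inv {atom}.
Arguments mdia {atom}. Arguments mbox {atom}. Arguments mtens {atom}.
Arguments mslash {atom}. Arguments mbslash {atom}.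
Arguments alpha_l {atom}. Arguments sigma_l {atom}.
Arguments alpha_r {atom}. Arguments sigma_r {atom}.

(* Spaces.  Every [[A]] is a tensor product of the atom spaces (with   *)
(* V^* identified with V); with the fixed bases, [[A]] is R^(d1 x..x dk)*)
(* where sh d A = [d1;..;dk] lists the dimensions of the tensor        *)
(* factors.  A basis vector is a multi-index (seq nat) in indices s.   *)
Section Spaces.
Variable atom : Type.
Variable d : atom -> nat.

Fixpoint sh (A : fml atom) : seq nat :=
  match A with
  | Atom p => [:: d p]
  | Dia A | Box A => sh A
  | Tens A B | Slash A B | Bslash A B => sh A ++ sh B
  end.
End Spaces.
Arguments sh {atom}.

Fixpoint rk {atom} (A : fml atom) : nat :=
  match A with
  | Atom _ => 1
  | Dia A | Box A => rk A
  | Tens A B | Slash A B | Bslash A B => rk A + rk B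
  end.

Fixpoint indices (s : seq nat) : seq (seq nat) :=
  match s with
  | [::] => [:: [::]]
  | n :: s' => [seq i :: t | i <- iota 0 n, t <- indices s']
  end.

(* Linear maps between such spaces, as matrices in the fixed bases:    *)
(* M y x = coefficient of basis vector y (output) in M(basis vector x). *)
Section Maps.
Variable R : realType.
Definition mx := seq nat -> seq nat -> R.

(* identity; also the associativity isomorphisms mxalpha, mxalpha^-1,     *)
(* which are identities on the flattened bases                          *)
Definition idm : mx := fun y x => (y == x)%:R.
Definition mxalpha : mx := idm.
Definition mxalpha_inv : mx := idm.
(* composition g o f, s = shape of the intermediate space *)
Definition mxcomp (s : seq nat) (g f : mx) : mx :=
  fun z x => \sum_(y <- indices s) g z y * f y x.
(* tensor f (x) g, nA = rank of the domain of f, nB = rank of codomain of f *)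
Definition mxtens (nA nB : nat) (f g : mx) : mx :=
  fun y x => f (take nB y) (take nA x) * g (drop nB y) (drop nA x).
(* eta_V : R -> V (x) V and eps_V : V (x) V -> R, V of shape s *)
Definition eta (s : seq nat) : mx :=
  fun y x => (take (size s) y == drop (size s) y)%:R.
Definition eps (s : seq nat) : mx :=
  fun y x => (take (size s) x == drop (size s) x)%:R.
(* symmetry sigma : V (x) W -> W (x) V, nA = rank of V *)
Definition mxsym (nA : nat) : mx :=
  fun y x => (y == drop nA x ++ take nA x)%:R.

Definition mx_eq (sA sB : seq nat) (M N : mx) : Prop :=
  forall y x, y \in indices sB -> x \in indices sA -> M y x = N y x.
End Maps.
Arguments mxcomp {R}.
Arguments mxtens {R}.
Arguments mx_eq {R}.

Fixpoint interp (R : realType) {atom} (d : atom -> nat)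
    {X Y : fml atom} (f : nld X Y) : mx R :=
  let s := sh d in
  match f with
  | ax A => idm R
  | dres A B f => interp R d f
  | dres_inv A B f => interp R d f
  | mdia A B f => interp R d f
  | mbox A B f => interp R d f
  | rres A B C f =>     (* ([[f]] (x) 1_B) o (1_A (x) eta_B) *)
      mxcomp (s A ++ s B ++ s B)
        (mxtens (rk A + rk B) (rk C) (interp R d f) (idm R))
        (mxtens (rk A) (rk A) (idm R) (eta R (s B)))
  | lres A B C f =>     (* (1_A (x) [[f]]) o (eta_A (x) 1_B) *)
      mxcomp (s A ++ s A ++ s B)
        (mxtens (rk A) (rk A) (idm R) (interp R d f))
        (mxtens 0 (rk A + rk A) (eta R (s A)) (idm R))
  | rres_inv A B C g => (* (1_C (x) eps_B) o ([[g]] (x) 1_B) *)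
      mxcomp (s C ++ s B ++ s B)
        (mxtens (rk C) (rk C) (idm R) (eps R (s B)))
        (mxtens (rk A) (rk C + rk B) (interp R d g) (idm R))
  | lres_inv A B C h => (* (eps_A (x) 1_C) o (1_A (x) [[h]]) *)
      mxcomp (s A ++ s A ++ s C)
        (mxtens (rk A + rk A) 0 (eps R (s A)) (idm R))
        (mxtens (rk A) (rk A) (idm R) (interp R d h))
  | mtens A B C D f g => mxtens (rk A) (rk B) (interp R d f) (interp R d g)
  | mslash A B C D f g =>
      (* (1_{B(x)C} (x) eps_D) o (1_{B(x)C} (x) [[g]] (x) 1_D)
         o ([[f]] (x) eta_C (x) 1_D) *)
      mxcomp (s B ++ s C ++ s D ++ s D)
        (mxtens (rk B + rk C) (rk B + rk C) (idm R) (eps R (s D)))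
        (mxcomp (s B ++ s C ++ s C ++ s D)
           (mxtens (rk B + rk C) (rk B + rk C) (idm R)
              (mxtens (rk C) (rk D) (interp R d g) (idm R)))
           (mxtens (rk A) (rk B) (interp R d f)
              (mxtens 0 (rk C + rk C) (eta R (s C)) (idm R))))
  | mbslash A B C D f g =>
      (* (eps_B (x) 1_{A(x)D}) o (1_B (x) [[f]] (x) 1_{A(x)D})
         o (1_B (x) eta_A (x) [[g]]) *)
      mxcomp (s B ++ s B ++ s A ++ s D)
        (mxtens (rk B + rk B) 0 (eps R (s B)) (idm R))
        (mxcomp (s B ++ s A ++ s A ++ s D)
           (mxtens (rk B) (rk B) (idm R)
              (mxtens (rk A) (rk B) (interp R d f) (idm R)))
           (mxtens (rk B) (rk B) (idm R)
              (mxtens 0 (rk A + rk A) (eta R (s A)) (interp R d g))))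
  | alpha_l A B C D f =>
      mxcomp (s A ++ s B ++ s C) (interp R d f) (mxalpha R)
  | sigma_l A B C D f =>
      mxcomp (s B ++ s A ++ s C) (interp R d f)
        (mxcomp (s B ++ s A ++ s C) (mxalpha_inv R)
          (mxcomp (s A ++ s B ++ s C)
             (mxtens (rk A + rk B) (rk B + rk A) (mxsym R (rk A)) (idm R))
             (mxalpha R)))
  | alpha_r A B C D f =>
      mxcomp (s A ++ s B ++ s C) (interp R d f) (mxalpha_inv R)
  | sigma_r A B C D f =>
      mxcomp (s A ++ s C ++ s B) (interp R d f)
        (mxcomp (s A ++ s C ++ s B) (mxalpha R)
          (mxcomp (s A ++ s B ++ s C)
             (mxtens (rk A) (rk A) (idm R) (mxsym R (rk B)))
             (mxalpha_inv R)))
  end.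

(* Index variables are natural numbers; an annotated sequent           *)
(* A_M --> B_N with delta delta^X_Y is recorded as (M, N, X, Y), with   *)
(* nxt a counter providing fresh variables.                            *)
Record annotation := Ann {
  ann_src : seq nat;
  ann_tgt : seq nat;
  ann_up  : seq nat;
  ann_lo  : seq nat;
  ann_nxt : nat
}.

Fixpoint annot {atom} {X Y : fml atom} (f : nld X Y) (n : nat)
    : annotation :=
  match f with
  | ax A =>
      let I := iota n (rk A) in let J := iota (n + rk A) (rk A) in
      Ann I J I J (n + rk A + rk A)
  | dres A B f => annot f n
  | dres_inv A B f => annot f n
  | mdia A B f => annot f n
  | mbox A B f => annot f n
  | rres A B C f =>
      let a := annot f n in
      Ann (take (rk A) (ann_src a)) (ann_tgt a ++ drop (rk A) (ann_src a))
          (ann_up a) (ann_lo a) (ann_nxt a)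
  | lres A B C f =>
      let a := annot f n in
      Ann (drop (rk A) (ann_src a)) (take (rk A) (ann_src a) ++ ann_tgt a)
          (ann_up a) (ann_lo a) (ann_nxt a)
  | rres_inv A B C g =>
      let a := annot g n in
      Ann (ann_src a ++ drop (rk C) (ann_tgt a)) (take (rk C) (ann_tgt a))
          (ann_up a) (ann_lo a) (ann_nxt a)
  | lres_inv A B C h =>
      let a := annot h n in
      Ann (take (rk A) (ann_tgt a) ++ ann_src a) (drop (rk A) (ann_tgt a))
          (ann_up a) (ann_lo a) (ann_nxt a)
  | mtens A B C D f g =>
      let a := annot f n in let b := annot g (ann_nxt a) in
      Ann (ann_src a ++ ann_src b) (ann_tgt a ++ ann_tgt b)
          (ann_up a ++ ann_up b) (ann_lo a ++ ann_lo b) (ann_nxt b)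
  | mslash A B C D f g =>
      let a := annot f n in let b := annot g (ann_nxt a) in
      Ann (ann_src a ++ ann_tgt b) (ann_tgt a ++ ann_src b)
          (ann_up a ++ ann_up b) (ann_lo a ++ ann_lo b) (ann_nxt b)
  | mbslash A B C D f g =>
      let a := annot f n in let b := annot g (ann_nxt a) in
      Ann (ann_tgt a ++ ann_src b) (ann_src a ++ ann_tgt b)
          (ann_up a ++ ann_up b) (ann_lo a ++ ann_lo b) (ann_nxt b)
  | alpha_l A B C D f => annot f n  (* flattened lists unchanged *)
  | sigma_l A B C D f =>
      let a := annot f n in let M := ann_src a in
      Ann (take (rk A) (drop (rk B) M) ++ take (rk B) M ++ drop (rk B + rk A) M)
          (ann_tgt a) (ann_up a) (ann_lo a) (ann_nxt a)
  | alpha_r A B C D f => annot f n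
  | sigma_r A B C D f =>
      let a := annot f n in let M := ann_src a in
      Ann (take (rk A) M ++ drop (rk A + rk C) M ++ take (rk C) (drop (rk A) M))
          (ann_tgt a) (ann_up a) (ann_lo a) (ann_nxt a)
  end.

(* The linear map denoted by an annotated delta delta^X_Y : A_M --> B_N:
   x_M |-> y_N = delta^X_Y x_M.  Its matrix entry at (y, x) is the value of
   delta^X_Y when the variables of M take the values x and those of N the
   values y. *)
Definition delta_map (R : realType) (M N X Y : seq nat) : mx R :=
  fun y x =>
    let v k := nth 0%N (x ++ y) (index k (M ++ N)) in
    (map v X == map v Y)%:R.

Definition Gmap (R : realType) {atom} {A B : fml atom} (f : nld A B) : mx R :=
  let a := annot f 0 in
  delta_map R (ann_src a) (ann_tgt a) (ann_up a) (ann_lo a).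

(* Both sides are compared entry by entry on basis vectors.  A basis vector of a
   composite space is a concatenation of blocks, one per tensor factor, and each
   clause of [interp] composes the premise maps with identities, units [eta] and
   counits [eps].  Summing out the basis vectors of the intermediate spaces, every
   summand is a product of Kronecker deltas, so the sums collapse (these are the
   snake equations): an entry of the conclusion is an entry of the premise at
   rearranged blocks, or a product of two such entries for a binary rule.  The
   annotation rearranges its index lists in the same way.  As the index variables
   of an annotation are pairwise distinct, the value of a delta at a basis vector
   only depends on the induced assignment of values to variables, which such a
   rearrangement does not change; and the two premises of a binary rule use
   disjoint variables, so its delta is the product of theirs. *)

From Pilot Require Import Defs.
From mathcomp Require Import all_boot all_order all_algebra.
From mathcomp Require Import reals ring zify.
Import GRing.Theory Num.Theory.
Set Implicit Arguments. Unset Strict Implicit. Unset Printing Implicit Defensive.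

Lemma take_catr (T : Type) n (s1 s2 : seq T) :
  size s1 <= n -> take n (s1 ++ s2) = s1 ++ take (n - size s1) s2.
Proof. by move=> Hn; rewrite take_cat ltnNge Hn. Qed.

Lemma dropl_cat (T : Type) n (s1 s2 : seq T) :
  n <= size s1 -> drop n (s1 ++ s2) = drop n s1 ++ s2.
Proof. by move=> Hn; rewrite -{1}(cat_take_drop n s1) -catA drop_size_cat ?size_takel. Qed.

Lemma drop_catr (T : Type) n (s1 s2 : seq T) :
  size s1 <= n -> drop n (s1 ++ s2) = drop (n - size s1) s2.
Proof. by move=> Hn; rewrite drop_cat ltnNge Hn. Qed.

Lemma take_le0 (T : Type) n (s : seq T) : n <= 0 -> take n s = [::].
Proof. by rewrite leqn0 => /eqP->; rewrite take0. Qed.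

Lemma drop_le0 (T : Type) n (s : seq T) : n <= 0 -> drop n s = s.
Proof. by rewrite leqn0 => /eqP->; rewrite drop0. Qed.

Lemma cat_splitP (T : Type) (s : seq T) m n : size s = m + n ->
  exists s1 s2, [/\ s = s1 ++ s2, size s1 = m & size s2 = n].
Proof.
move=> Hs; exists (take m s), (drop m s).
by rewrite cat_take_drop size_drop size_takel Hs ?leq_addr ?addKn.
Qed.

(** * Basis vectors of the spaces [sh d A] *)

Lemma size_sh atom (d : atom -> nat) (A : fml atom) : size (sh d A) = rk A.
Proof. by elim: A => //= *; rewrite size_cat; congruence. Qed.

Lemma mem_indices_cons n s y :
  (y \in indices (n :: s)) = if y is i :: t then (i < n) && (t \in indices s) else false.
Proof.
apply/allpairsP/idP => [[[i t]] /= [+ + ->]|]; first by rewrite mem_iota => /andP[_ ->] ->.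
by case: y => // i t /andP[Hi Ht]; exists (i, t); rewrite mem_iota.
Qed.

Lemma size_indices s y : y \in indices s -> size y = size s.
Proof.
elim: s y => [|n s IH] y; first by rewrite mem_seq1 => /eqP->.
by case: y => [|i t]; rewrite mem_indices_cons // => /andP[_ /IH] /= ->.
Qed.

Lemma mem_indices_cat s1 s2 y1 y2 : size y1 = size s1 ->
  (y1 ++ y2 \in indices (s1 ++ s2)) = (y1 \in indices s1) && (y2 \in indices s2).
Proof.
elim: s1 y1 => [|n s IH] [|i t] //= [] Hs.
by rewrite !mem_indices_cons IH // andbA.
Qed.

Lemma indices_catP s1 s2 y : y \in indices (s1 ++ s2) ->
  exists y1 y2, [/\ y = y1 ++ y2, y1 \in indices s1 & y2 \in indices s2].
Proof.
move=> Hy; exists (take (size s1) y), (drop (size s1) y).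
have Hs : size (take (size s1) y) = size s1.
  by rewrite size_takel // (size_indices Hy) size_cat leq_addr.
move: Hy; rewrite -{1}(cat_take_drop (size s1) y) mem_indices_cat //.
by case/andP; split; rewrite ?cat_take_drop.
Qed.

Lemma uniq_indices s : uniq (indices s).
Proof.
elim: s => [|n s IH] //=; apply: allpairs_uniq => //; first exact: iota_uniq.
by move=> [? ?] [? ?] _ _ [-> ->].
Qed.

Ltac index_sizes :=
  repeat match goal with
  | H : is_true (_ \in indices _) |- _ => move/size_indices: H => H; rewrite ?size_sh in H
  end.

Ltac solve_size :=
  rewrite /= ?size_cat ?size_drop ?size_take_min;
  repeat match goal with H : size ?x = _ |- context [size ?x] => rewrite H end;
  lia.

Ltac perm_by_count := apply/permP => ? /=; rewrite !count_cat; lia.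

Section BigIndices.
Local Open Scope ring_scope.
Variable V : nmodType.

Lemma big_indices_cat s1 s2 (F : seq nat -> V) :
  \sum_(y <- indices (s1 ++ s2)) F y =
  \sum_(y1 <- indices s1) \sum_(y2 <- indices s2) F (y1 ++ y2).
Proof.
elim: s1 F => [|n s IH] F /=; first by rewrite big_seq1.
by rewrite !big_allpairs_dep; apply: eq_bigr => i _; rewrite IH.
Qed.

Lemma big_indices_cat3 s1 s2 s3 (F : seq nat -> V) :
  \sum_(y <- indices (s1 ++ s2 ++ s3)) F y =
  \sum_(y1 <- indices s1) \sum_(y2 <- indices s2) \sum_(y3 <- indices s3)
    F (y1 ++ y2 ++ y3).
Proof. by rewrite big_indices_cat; apply: eq_bigr => y1 _; rewrite big_indices_cat. Qed.

Lemma big_indices_cat4 s1 s2 s3 s4 (F : seq nat -> V) :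
  \sum_(y <- indices (s1 ++ s2 ++ s3 ++ s4)) F y =
  \sum_(y1 <- indices s1) \sum_(y2 <- indices s2) \sum_(y3 <- indices s3)
    \sum_(y4 <- indices s4) F (y1 ++ y2 ++ y3 ++ y4).
Proof. by rewrite big_indices_cat; apply: eq_bigr => y1 _; rewrite big_indices_cat3. Qed.
End BigIndices.

(** * Entries of the compact closed interpretation *)

Section Entries.
Local Open Scope ring_scope.
Variable R : realType.
Local Notation I := indices.
Local Notation idm := (idm R).

Lemma idm_cat y1 y2 x1 x2 : size y1 = size x1 ->
  idm (y1 ++ y2) (x1 ++ x2) = idm y1 x1 * idm y2 x2.
Proof. by move=> Hs; rewrite /Defs.idm eqseq_cat // -natrM mulnb. Qed.

Lemma etaE s y x : eta R s y x = idm (take (size s) y) (drop (size s) y).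
Proof. by []. Qed.

Lemma epsE s y x : eps R s y x = idm (take (size s) x) (drop (size s) x).
Proof. by []. Qed.

Lemma mxsymE n y x : mxsym R n y x = idm y (drop n x ++ take n x).
Proof. by []. Qed.

Lemma mxtens_cat nA nB (F G : mx R) y1 y2 x1 x2 : size y1 = nB -> size x1 = nA ->
  mxtens nA nB F G (y1 ++ y2) (x1 ++ x2) = F y1 x1 * G y2 x2.
Proof. by move=> <- <-; rewrite /mxtens !take_size_cat ?drop_size_cat. Qed.

Lemma sum_idm s c (G : seq nat -> R) : c \in I s ->
  \sum_(y <- I s) idm y c * G y = G c.
Proof.
move=> Hc; rewrite (bigD1_seq c) ?uniq_indices //= /Defs.idm eqxx mul1r.
by rewrite big1 ?addr0 // => y /negbTE->; rewrite mul0r.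
Qed.

Lemma sum_idml s c (G : seq nat -> R) : c \in I s ->
  \sum_(y <- I s) idm c y * G y = G c.
Proof. by move=> Hc; under eq_bigr do rewrite /Defs.idm eq_sym; apply: sum_idm. Qed.

Lemma mxcomp_idml s (F : mx R) z x : z \in I s -> mxcomp s idm F z x = F z x.
Proof. exact: sum_idml. Qed.

Lemma mxcomp_idmr s (F : mx R) z x : x \in I s -> mxcomp s F idm z x = F z x.
Proof. by move=> Hx; rewrite /mxcomp; under eq_bigr do rewrite mulrC; rewrite sum_idm. Qed.

(* Index vectors are concatenations of blocks of known sizes and every tensor
   factor splits them at a block boundary, so each [take]/[drop] reduces to a
   concatenation of blocks. *)
Ltac eval_entries :=
  index_sizes;
  rewrite /mxtens ?etaE ?epsE ?mxsymE;
  repeat first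
    [ rewrite cat0s
    | rewrite cats0
    | rewrite takel_cat; last by solve_size
    | rewrite take_catr; last by solve_size
    | rewrite take_oversize; last by solve_size
    | rewrite take_le0; last by solve_size
    | rewrite dropl_cat; last by solve_size
    | rewrite drop_catr; last by solve_size
    | rewrite drop_oversize; last by solve_size
    | rewrite drop_le0; last by solve_size
    | rewrite idm_cat; last by solve_size ].

(* Sums out, innermost first, every summation variable pinned by a delta. *)
Ltac collapse_deltas :=
  repeat first
    [ rewrite sum_idm //
    | rewrite sum_idml //
    | under eq_big_seq => ? ? do progress collapse_deltas ].

Lemma rres_entry (sA sB sC : seq nat) (F : mx R) a b c :
  a \in I sA -> b \in I sB -> c \in I sC ->
  mxcomp (sA ++ sB ++ sB) (mxtens (size sA + size sB) (size sC) F idm)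
    (mxtens (size sA) (size sA) idm (eta R sB)) (c ++ b) a = F c (a ++ b).
Proof.
move=> Ha Hb Hc; rewrite /mxcomp big_indices_cat3.
transitivity (\sum_(i <- I sA) \sum_(j <- I sB) \sum_(k <- I sB)
                idm b k * (idm j k * (idm i a * F c (i ++ j)))).
  apply: eq_big_seq => i Hi; apply: eq_big_seq => j Hj; apply: eq_big_seq => k Hk.
  by eval_entries; ring.
by collapse_deltas.
Qed.

Lemma lres_entry (sA sB : seq nat) (F : mx R) a b c :
  a \in I sA -> b \in I sB ->
  mxcomp (sA ++ sA ++ sB) (mxtens (size sA) (size sA) idm F)
    (mxtens 0 (size sA + size sA) (eta R sA) idm) (a ++ c) b = F c (a ++ b).
Proof.
move=> Ha Hb; rewrite /mxcomp big_indices_cat3.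
transitivity (\sum_(i <- I sA) \sum_(j <- I sA) \sum_(k <- I sB)
                idm k b * (idm i j * (idm a i * F c (j ++ k)))).
  apply: eq_big_seq => i Hi; apply: eq_big_seq => j Hj; apply: eq_big_seq => k Hk.
  by eval_entries; ring.
by collapse_deltas.
Qed.

Lemma rres_inv_entry (sA sB sC : seq nat) (G : mx R) a b c :
  a \in I sA -> b \in I sB -> c \in I sC ->
  mxcomp (sC ++ sB ++ sB) (mxtens (size sC) (size sC) idm (eps R sB))
    (mxtens (size sA) (size sC + size sB) G idm) c (a ++ b) = G (c ++ b) a.
Proof.
move=> Ha Hb Hc; rewrite /mxcomp big_indices_cat3.
transitivity (\sum_(i <- I sC) \sum_(j <- I sB) \sum_(k <- I sB)
                idm k b * (idm j k * (idm c i * G (i ++ j) a))).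
  apply: eq_big_seq => i Hi; apply: eq_big_seq => j Hj; apply: eq_big_seq => k Hk.
  by eval_entries; ring.
by collapse_deltas.
Qed.

Lemma lres_inv_entry (sA sC : seq nat) (H : mx R) a b c :
  a \in I sA -> c \in I sC ->
  mxcomp (sA ++ sA ++ sC) (mxtens (size sA + size sA) 0 (eps R sA) idm)
    (mxtens (size sA) (size sA) idm H) c (a ++ b) = H (a ++ c) b.
Proof.
move=> Ha Hc; rewrite /mxcomp big_indices_cat3.
transitivity (\sum_(i <- I sA) \sum_(j <- I sA) \sum_(k <- I sC)
                idm c k * (idm i j * (idm i a * H (j ++ k) b))).
  apply: eq_big_seq => i Hi; apply: eq_big_seq => j Hj; apply: eq_big_seq => k Hk.
  by eval_entries; ring.
by collapse_deltas.
Qed.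

Lemma sigma_l_entry (sA sB sC : seq nat) (F : mx R) z a b c :
  a \in I sA -> b \in I sB -> c \in I sC ->
  mxcomp (sB ++ sA ++ sC) F (mxcomp (sB ++ sA ++ sC) (mxalpha_inv R)
    (mxcomp (sA ++ sB ++ sC)
       (mxtens (size sA + size sB) (size sB + size sA) (mxsym R (size sA)) idm)
       (mxalpha R))) z (a ++ b ++ c) = F z (b ++ a ++ c).
Proof.
move=> Ha Hb Hc; have Habc : a ++ b ++ c \in I (sA ++ sB ++ sC).
  by rewrite !mem_indices_cat ?Ha ?Hb ?(size_indices Ha) ?(size_indices Hb).
rewrite /mxalpha /mxalpha_inv {1}/mxcomp.
under eq_big_seq => w Hw do rewrite mxcomp_idml // mxcomp_idmr //.
rewrite big_indices_cat3.
transitivity (\sum_(i <- I sB) \sum_(j <- I sA) \sum_(k <- I sC)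
                idm k c * (idm j a * (idm i b * F z (i ++ j ++ k)))).
  apply: eq_big_seq => i Hi; apply: eq_big_seq => j Hj; apply: eq_big_seq => k Hk.
  by eval_entries; ring.
by collapse_deltas.
Qed.

Lemma sigma_r_entry (sA sB sC : seq nat) (F : mx R) z a b c :
  a \in I sA -> b \in I sB -> c \in I sC ->
  mxcomp (sA ++ sC ++ sB) F (mxcomp (sA ++ sC ++ sB) (mxalpha R)
    (mxcomp (sA ++ sB ++ sC)
       (mxtens (size sA) (size sA) idm (mxsym R (size sB)))
       (mxalpha_inv R))) z (a ++ b ++ c) = F z (a ++ c ++ b).
Proof.
move=> Ha Hb Hc; have Habc : a ++ b ++ c \in I (sA ++ sB ++ sC).
  by rewrite !mem_indices_cat ?Ha ?Hb ?(size_indices Ha) ?(size_indices Hb).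
rewrite /mxalpha /mxalpha_inv {1}/mxcomp.
under eq_big_seq => w Hw do rewrite mxcomp_idml // mxcomp_idmr //.
rewrite big_indices_cat3.
transitivity (\sum_(i <- I sA) \sum_(j <- I sC) \sum_(k <- I sB)
                idm k b * (idm j c * (idm i a * F z (i ++ j ++ k)))).
  apply: eq_big_seq => i Hi; apply: eq_big_seq => j Hj; apply: eq_big_seq => k Hk.
  by eval_entries; ring.
by collapse_deltas.
Qed.

Lemma mslash_inner_entry (sA sB sC sD : seq nat) (F G : mx R) a d i j k l :
  a \in I sA -> d \in I sD ->
  i \in I sB -> j \in I sC -> k \in I sD -> l \in I sD ->
  mxcomp (sB ++ sC ++ sC ++ sD)
    (mxtens (size sB + size sC) (size sB + size sC) idm
       (mxtens (size sC) (size sD) G idm))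
    (mxtens (size sA) (size sB) F (mxtens 0 (size sC + size sC) (eta R sC) idm))
    (i ++ j ++ k ++ l) (a ++ d) = F i a * G k j * idm l d.
Proof.
move=> Ha Hd Hi Hj Hk Hl; rewrite /mxcomp big_indices_cat4.
transitivity (\sum_(p <- I sB) \sum_(q <- I sC) \sum_(r <- I sC) \sum_(t <- I sD)
   idm t d * (idm q r * (idm j q * (idm i p * (F p a * G k r * idm l t))))).
  apply: eq_big_seq => p Hp; apply: eq_big_seq => q Hq.
  apply: eq_big_seq => r Hr; apply: eq_big_seq => t Ht.
  by eval_entries; ring.
by collapse_deltas.
Qed.

Lemma mslash_entry (sA sB sC sD : seq nat) (F G : mx R) a b c d :
  a \in I sA -> b \in I sB -> c \in I sC -> d \in I sD ->
  mxcomp (sB ++ sC ++ sD ++ sD)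
    (mxtens (size sB + size sC) (size sB + size sC) idm (eps R sD))
    (mxcomp (sB ++ sC ++ sC ++ sD)
       (mxtens (size sB + size sC) (size sB + size sC) idm
          (mxtens (size sC) (size sD) G idm))
       (mxtens (size sA) (size sB) F
          (mxtens 0 (size sC + size sC) (eta R sC) idm)))
    (b ++ c) (a ++ d) = F b a * G d c.
Proof.
move=> Ha Hb Hc Hd; rewrite {1}/mxcomp big_indices_cat4.
transitivity (\sum_(i <- I sB) \sum_(j <- I sC) \sum_(k <- I sD) \sum_(l <- I sD)
   idm l d * (idm k l * (idm c j * (idm b i * (F i a * G k j))))).
  apply: eq_big_seq => i Hi; apply: eq_big_seq => j Hj.
  apply: eq_big_seq => k Hk; apply: eq_big_seq => l Hl.
  by rewrite mslash_inner_entry //; eval_entries; ring.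
by collapse_deltas.
Qed.

Lemma mbslash_inner_entry (sA sB sD : seq nat) (F G : mx R) b c i j k l :
  b \in I sB ->
  i \in I sB -> j \in I sB -> k \in I sA -> l \in I sD ->
  mxcomp (sB ++ sA ++ sA ++ sD)
    (mxtens (size sB) (size sB) idm (mxtens (size sA) (size sB) F idm))
    (mxtens (size sB) (size sB) idm (mxtens 0 (size sA + size sA) (eta R sA) G))
    (i ++ j ++ k ++ l) (b ++ c) = idm i b * F j k * G l c.
Proof.
move=> Hb Hi Hj Hk Hl; rewrite /mxcomp big_indices_cat4.
transitivity (\sum_(p <- I sB) \sum_(q <- I sA) \sum_(r <- I sA) \sum_(t <- I sD)
   idm l t * (idm k r * (idm q r * (idm i p * (idm p b * F j q * G t c))))).
  apply: eq_big_seq => p Hp; apply: eq_big_seq => q Hq.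
  apply: eq_big_seq => r Hr; apply: eq_big_seq => t Ht.
  by eval_entries; ring.
by collapse_deltas.
Qed.

Lemma mbslash_entry (sA sB sD : seq nat) (F G : mx R) a b c d :
  a \in I sA -> b \in I sB -> d \in I sD ->
  mxcomp (sB ++ sB ++ sA ++ sD)
    (mxtens (size sB + size sB) 0 (eps R sB) idm)
    (mxcomp (sB ++ sA ++ sA ++ sD)
       (mxtens (size sB) (size sB) idm (mxtens (size sA) (size sB) F idm))
       (mxtens (size sB) (size sB) idm
          (mxtens 0 (size sA + size sA) (eta R sA) G)))
    (a ++ d) (b ++ c) = F b a * G d c.
Proof.
move=> Ha Hb Hd; rewrite {1}/mxcomp big_indices_cat4.
transitivity (\sum_(i <- I sB) \sum_(j <- I sB) \sum_(k <- I sA) \sum_(l <- I sD)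
   idm d l * (idm a k * (idm i j * (idm i b * (F j k * G l c))))).
  apply: eq_big_seq => i Hi; apply: eq_big_seq => j Hj.
  apply: eq_big_seq => k Hk; apply: eq_big_seq => l Hl.
  by rewrite mbslash_inner_entry //; eval_entries; ring.
by collapse_deltas.
Qed.
End Entries.

(** * Generalised Kronecker deltas *)

Definition env (K V : seq nat) (k : nat) : nat := nth 0 V (index k K).

Lemma env_catl K1 V1 K2 V2 k : size K1 = size V1 -> k \in K1 ->
  env (K1 ++ K2) (V1 ++ V2) k = env K1 V1 k.
Proof. by move=> Hs Hk; rewrite /env index_cat Hk nth_cat -Hs index_mem Hk. Qed.

Lemma env_catr K1 V1 K2 V2 k : size K1 = size V1 -> k \notin K1 ->
  env (K1 ++ K2) (V1 ++ V2) k = env K2 V2 k.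
Proof.
by move=> Hs /negbTE Hk; rewrite /env index_cat Hk nth_cat -Hs ltnNge leq_addr addKn.
Qed.

Lemma map_env K V : uniq K -> size K = size V -> map (env K V) K = V.
Proof.
move=> HK Hs; apply: (@eq_from_nth _ 0); rewrite size_map // => i Hi.
by rewrite (nth_map 0) // /env index_uniq.
Qed.

Lemma mem_zip_env K V k v : uniq K -> size K = size V ->
  ((k, v) \in zip K V) = (k \in K) && (v == env K V k).
Proof.
move=> HK Hs; apply/idP/andP => [/(nthP (0, 0))[i] | [Hk /eqP->]].
  rewrite size_zip -Hs minnn => Hi; rewrite nth_zip // => -[<- <-].
  by rewrite mem_nth // /env index_uniq.
have -> : (k, env K V k) = nth (0, 0) (zip K V) (index k K).
  by rewrite nth_zip // nth_index.
by rewrite mem_nth // size_zip -Hs minnn index_mem.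
Qed.

Lemma env_perm K V K' V' : uniq K -> size K = size V -> size K' = size V' ->
  perm_eq (zip K V) (zip K' V') -> env K V =1 env K' V'.
Proof.
move=> HK Hs Hs' Hp k.
have HKK' : perm_eq K K'.
  by have := perm_map (@fst nat nat) Hp; rewrite -!/(unzip1 _) !unzip1_zip ?Hs ?Hs'.
have HK' : uniq K' by rewrite -(perm_uniq HKK').
case Hk: (k \in K).
  have := mem_zip_env k (env K V k) HK Hs; rewrite Hk eqxx (perm_mem Hp).
  by rewrite mem_zip_env // => /andP[_ /eqP].
have Hk' : k \notin K' by rewrite -(perm_mem HKK') Hk.
by rewrite /env !nth_default // -?Hs -?Hs' memNindex ?Hk.
Qed.

Section DeltaMaps.
Local Open Scope ring_scope.
Variable R : realType.

Lemma delta_mapE M N X Y y x : delta_map R M N X Y y x =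
  (map (env (M ++ N) (x ++ y)) X == map (env (M ++ N) (x ++ y)) Y)%:R.
Proof. by []. Qed.

Lemma delta_map_perm M N M' N' X Y y x y' x' :
  uniq (M ++ N) -> size (M ++ N) = size (x ++ y) -> size (M' ++ N') = size (x' ++ y') ->
  perm_eq (zip (M ++ N) (x ++ y)) (zip (M' ++ N') (x' ++ y')) ->
  delta_map R M N X Y y x = delta_map R M' N' X Y y' x'.
Proof. by move=> HU Hs Hs' Hp; rewrite !delta_mapE !(eq_map (env_perm HU Hs Hs' Hp)). Qed.

Lemma delta_map_id M N y x : uniq (M ++ N) -> size M = size x -> size N = size y ->
  delta_map R M N M N y x = idm R y x.
Proof.
move=> HU HM HN; rewrite delta_mapE /idm eq_sym.
have := @map_env (M ++ N) (x ++ y) HU.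
rewrite map_cat !size_cat HM HN => /(_ erefl) /eqP.
by rewrite eqseq_cat ?size_map // => /andP[/eqP-> /eqP->].
Qed.

Lemma delta_map_cat M1 N1 X1 Y1 y1 x1 M2 N2 X2 Y2 y2 x2 :
  size (M1 ++ N1) = size (x1 ++ y1) -> size X1 = size Y1 ->
  {subset X1 ++ Y1 <= M1 ++ N1} -> {subset X2 ++ Y2 <= M2 ++ N2} ->
  uniq ((M1 ++ N1) ++ M2 ++ N2) ->
  delta_map R ((M1 ++ N1) ++ M2) N2 (X1 ++ X2) (Y1 ++ Y2) y2 ((x1 ++ y1) ++ x2) =
  delta_map R M1 N1 X1 Y1 y1 x1 * delta_map R M2 N2 X2 Y2 y2 x2.
Proof.
move=> Hs HXY sub1 sub2; rewrite cat_uniq => /and3P[_ Hdisj _].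
rewrite !delta_mapE !map_cat eqseq_cat ?size_map // -natrM mulnb.
set e := env (((M1 ++ N1) ++ M2) ++ N2) _.
have env1 : {in X1 ++ Y1, e =1 env (M1 ++ N1) (x1 ++ y1)}.
  by move=> k /sub1 Hk; rewrite /e -[X in env X]catA -[X in env _ X]catA env_catl.
have env2 : {in X2 ++ Y2, e =1 env (M2 ++ N2) (x2 ++ y2)}.
  move=> k /sub2 Hk; rewrite /e -[X in env X]catA -[X in env _ X]catA env_catr //.
  by apply: contraNN Hdisj => Hk1; apply/hasP; exists k.
congr (_ %:R); congr (nat_of_bool (_ && _)); congr (_ == _); apply/eq_in_map.
- by apply: sub_in1 env1 => k Hk; rewrite mem_cat Hk.
- by apply: sub_in1 env1 => k Hk; rewrite mem_cat Hk orbT.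
- by apply: sub_in1 env2 => k Hk; rewrite mem_cat Hk.
- by apply: sub_in1 env2 => k Hk; rewrite mem_cat Hk orbT.
Qed.
End DeltaMaps.

(** * Correctness of the annotation *)

(* [wf_fresh] keeps the variables in [n, ann_nxt a), which makes the
   annotations of the two premises of a binary rule disjoint. *)
Record wf_annot (a : annotation) (n rX rY : nat) : Prop := WfAnnot {
  wf_size_src : size (ann_src a) = rX;
  wf_size_tgt : size (ann_tgt a) = rY;
  wf_size_delta : size (ann_up a) = size (ann_lo a);
  wf_perm : perm_eq (ann_src a ++ ann_tgt a) (ann_up a ++ ann_lo a);
  wf_uniq : uniq (ann_src a ++ ann_tgt a);
  wf_nxt : n <= ann_nxt a;
  wf_fresh : all (fun k => n <= k < ann_nxt a) (ann_src a ++ ann_tgt a) }.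

Lemma wf_annot_perm s t u l m n rX rY s' t' rX' rY' :
  wf_annot (Ann s t u l m) n rX rY -> perm_eq (s' ++ t') (s ++ t) ->
  size s' = rX' -> size t' = rY' -> wf_annot (Ann s' t' u l m) n rX' rY'.
Proof.
case=> /= _ _ Hul Hp Hu Hn Ha Hp' Hs Ht; split => //=.
- exact: perm_trans Hp' Hp.
- by rewrite (perm_uniq Hp').
- by rewrite (perm_all _ Hp').
Qed.

Lemma wf_annot_disjoint a b n rX rY rX' rY' :
  wf_annot a n rX rY -> wf_annot b (ann_nxt a) rX' rY' ->
  uniq ((ann_src a ++ ann_tgt a) ++ ann_src b ++ ann_tgt b).
Proof.
case=> _ _ _ _ Hu _ /allP Ha [_ _ _ _ Hu' _ /allP Hb].
rewrite cat_uniq Hu Hu' andbT; apply/hasPn => k /Hb /andP[Hk _].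
by apply/negP => /Ha /andP[_]; rewrite ltnNge Hk.
Qed.

Lemma wf_annot_cat a b n rX rY rX2 rY2 s' t' rX' rY' :
  wf_annot a n rX rY -> wf_annot b (ann_nxt a) rX2 rY2 ->
  perm_eq (s' ++ t') ((ann_src a ++ ann_tgt a) ++ ann_src b ++ ann_tgt b) ->
  size s' = rX' -> size t' = rY' ->
  wf_annot (Ann s' t' (ann_up a ++ ann_up b) (ann_lo a ++ ann_lo b) (ann_nxt b)) n rX' rY'.
Proof.
move=> Ha Hb Hp' Hs Ht; have Hu := wf_annot_disjoint Ha Hb.
case: Ha Hb => _ _ Hul Hp _ Hn /allP Ha [_ _ Hul2 Hp2 _ Hn2 /allP Hb].
split => //=.
- by rewrite !size_cat Hul Hul2.
- apply: perm_trans Hp' _; move/permP: Hp => Hp; move/permP: Hp2 => Hp2.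
  by apply/permP => k; move: (Hp k) (Hp2 k); rewrite !count_cat; lia.
- by rewrite (perm_uniq Hp').
- exact: leq_trans Hn Hn2.
- rewrite (perm_all _ Hp') all_cat; apply/andP; split; apply/allP => k.
    by move/Ha => /andP[? ?]; lia.
  by move/Hb => /andP[? ?]; lia.
Qed.

Section Correctness.
Local Open Scope ring_scope.
Variables (R : realType) (atom : Type) (d : atom -> nat).
Local Notation I := indices.

Definition ann_map (a : annotation) : mx R :=
  delta_map R (ann_src a) (ann_tgt a) (ann_up a) (ann_lo a).

(* The first variable [n] is arbitrary because the second premise of a binary
   rule is annotated from [ann_nxt] of the first. *)
Definition annot_correct (X Y : fml atom) (f : nld X Y) : Prop :=
  forall n, wf_annot (annot f n) n (rk X) (rk Y) /\
    mx_eq (sh d X) (sh d Y) (interp R d f) (ann_map (annot f n)).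

Lemma ann_map_cat a b n rX rY rX2 rY2 :
  wf_annot a n rX rY -> wf_annot b (ann_nxt a) rX2 rY2 -> forall y1 x1 y2 x2,
  size (ann_src a ++ ann_tgt a) = size (x1 ++ y1) ->
  ann_map a y1 x1 * ann_map b y2 x2 =
  delta_map R ((ann_src a ++ ann_tgt a) ++ ann_src b) (ann_tgt b)
    (ann_up a ++ ann_up b) (ann_lo a ++ ann_lo b) y2 ((x1 ++ y1) ++ x2).
Proof.
move=> Ha Hb y1 x1 y2 x2 Hs; have Hu := wf_annot_disjoint Ha Hb.
rewrite delta_map_cat ?(wf_size_delta Ha) // => k.
  by rewrite (perm_mem (wf_perm Ha)).
by rewrite (perm_mem (wf_perm Hb)).
Qed.

Ltac solve_delta_perm :=
  index_sizes; rewrite /ann_map /=;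
  apply: delta_map_perm => //; try solve_size;
  rewrite -!catA !zip_cat; try solve_size; perm_by_count.

Lemma annot_correct_ax A : annot_correct (ax A).
Proof.
move=> n /=; have Hu : uniq (iota n (rk A) ++ iota (n + rk A) (rk A)).
  by rewrite -iotaD iota_uniq.
split.
  split; rewrite /= ?size_iota //; first lia.
  by apply/allP => k; rewrite mem_cat !mem_iota; lia.
move=> y x Hy Hx; rewrite /ann_map /= delta_map_id ?size_iota //.
  by rewrite (size_indices Hx) size_sh.
by rewrite (size_indices Hy) size_sh.
Qed.

Lemma annot_correct_rres A B C (f : nld (Tens A B) C) :
  annot_correct f -> annot_correct (rres A B C f).
Proof.
move=> IH n /=; case: (IH n); case: (annot f n) => s t u l m Hwf IHf.
case: (Hwf) => /= Hs Ht _ _ Hu _ _.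
have [P [Q [Es HP HQ]]] := cat_splitP Hs; subst s.
rewrite take_size_cat // drop_size_cat //; split.
  by apply: (wf_annot_perm Hwf); rewrite ?size_cat ?Ht ?HQ //; perm_by_count.
move=> y x Hy Hx; have [c [b [-> Hc Hb]]] := indices_catP Hy.
rewrite -!(size_sh d) rres_entry // IHf //; last first.
  by rewrite mem_indices_cat ?Hx ?Hb ?(size_indices Hx).
by solve_delta_perm.
Qed.

Lemma annot_correct_lres A B C (f : nld (Tens A B) C) :
  annot_correct f -> annot_correct (lres A B C f).
Proof.
move=> IH n /=; case: (IH n); case: (annot f n) => s t u l m Hwf IHf.
case: (Hwf) => /= Hs Ht _ _ Hu _ _.
have [P [Q [Es HP HQ]]] := cat_splitP Hs; subst s.
rewrite take_size_cat // drop_size_cat //; split.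
  by apply: (wf_annot_perm Hwf); rewrite ?size_cat ?Ht ?HP //; perm_by_count.
move=> y x Hy Hx; have [a [c [-> Ha Hc]]] := indices_catP Hy.
rewrite -!(size_sh d) lres_entry // IHf //; last first.
  by rewrite mem_indices_cat ?Hx ?Ha ?(size_indices Ha).
by solve_delta_perm.
Qed.

Lemma annot_correct_rres_inv A B C (g : nld A (Slash C B)) :
  annot_correct g -> annot_correct (rres_inv A B C g).
Proof.
move=> IH n /=; case: (IH n); case: (annot g n) => s t u l m Hwf IHg.
case: (Hwf) => /= Hs Ht _ _ Hu _ _.
have [P [Q [Et HP HQ]]] := cat_splitP Ht; subst t.
rewrite take_size_cat // drop_size_cat //; split.
  by apply: (wf_annot_perm Hwf); rewrite ?size_cat ?Hs ?HQ //; perm_by_count.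
move=> y x Hy Hx; have [a [b [-> Ha Hb]]] := indices_catP Hx.
rewrite -!(size_sh d) rres_inv_entry // IHg //; last first.
  by rewrite mem_indices_cat ?Hy ?Hb ?(size_indices Hy).
by solve_delta_perm.
Qed.

Lemma annot_correct_lres_inv A B C (h : nld B (Bslash A C)) :
  annot_correct h -> annot_correct (lres_inv A B C h).
Proof.
move=> IH n /=; case: (IH n); case: (annot h n) => s t u l m Hwf IHh.
case: (Hwf) => /= Hs Ht _ _ Hu _ _.
have [P [Q [Et HP HQ]]] := cat_splitP Ht; subst t.
rewrite take_size_cat // drop_size_cat //; split.
  by apply: (wf_annot_perm Hwf); rewrite ?size_cat ?Hs ?HP //; perm_by_count.
move=> y x Hy Hx; have [a [b [-> Ha Hb]]] := indices_catP Hx.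
rewrite -!(size_sh d) lres_inv_entry // IHh //; last first.
  by rewrite mem_indices_cat ?Hy ?Ha ?(size_indices Ha).
by solve_delta_perm.
Qed.

Lemma annot_correct_mtens A B C D (f : nld A B) (g : nld C D) :
  annot_correct f -> annot_correct g -> annot_correct (mtens A B C D f g).
Proof.
move=> IHf IHg n /=.
have [Wf Hf] := IHf n; have [Wg Hg] := IHg (ann_nxt (annot f n)).
have Hu := wf_annot_disjoint Wf Wg; rewrite catA in Hu.
have [Hs Ht _ _ _ _ _] := Wf; have [Hs2 Ht2 _ _ _ _ _] := Wg.
split.
  by apply: (wf_annot_cat Wf Wg); rewrite ?size_cat ?Hs ?Hs2 ?Ht ?Ht2 //; perm_by_count.
move=> y x Hy Hx; have [b [e [-> Hb He]]] := indices_catP Hy.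
have [a [c [-> Ha Hc]]] := indices_catP Hx.
rewrite mxtens_cat ?(size_indices Ha) ?(size_indices Hb) ?size_sh //.
rewrite Hf // Hg // (ann_map_cat Wf Wg); first by solve_delta_perm.
by index_sizes; solve_size.
Qed.

Lemma annot_correct_mslash A B C D (f : nld A B) (g : nld C D) :
  annot_correct f -> annot_correct g -> annot_correct (mslash A B C D f g).
Proof.
move=> IHf IHg n /=.
have [Wf Hf] := IHf n; have [Wg Hg] := IHg (ann_nxt (annot f n)).
have Hu := wf_annot_disjoint Wf Wg; rewrite catA in Hu.
have [Hs Ht _ _ _ _ _] := Wf; have [Hs2 Ht2 _ _ _ _ _] := Wg.
split.
  by apply: (wf_annot_cat Wf Wg); rewrite ?size_cat ?Hs ?Hs2 ?Ht ?Ht2 //; perm_by_count.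
move=> y x Hy Hx; have [b [c [-> Hb Hc]]] := indices_catP Hy.
have [a [e [-> Ha He]]] := indices_catP Hx.
rewrite -!(size_sh d) mslash_entry // Hf // Hg // (ann_map_cat Wf Wg).
  by solve_delta_perm.
by index_sizes; solve_size.
Qed.

Lemma annot_correct_mbslash A B C D (f : nld A B) (g : nld C D) :
  annot_correct f -> annot_correct g -> annot_correct (mbslash A B C D f g).
Proof.
move=> IHf IHg n /=.
have [Wf Hf] := IHf n; have [Wg Hg] := IHg (ann_nxt (annot f n)).
have Hu := wf_annot_disjoint Wf Wg; rewrite catA in Hu.
have [Hs Ht _ _ _ _ _] := Wf; have [Hs2 Ht2 _ _ _ _ _] := Wg.
split.
  by apply: (wf_annot_cat Wf Wg); rewrite ?size_cat ?Hs ?Hs2 ?Ht ?Ht2 //; perm_by_count.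
move=> y x Hy Hx; have [a [e [-> Ha He]]] := indices_catP Hy.
have [b [c [-> Hb Hc]]] := indices_catP Hx.
rewrite -!(size_sh d) mbslash_entry // Hf // Hg // (ann_map_cat Wf Wg).
  by solve_delta_perm.
by index_sizes; solve_size.
Qed.

Lemma annot_correct_alpha_l A B C D (f : nld (Tens (Tens (Dia A) B) C) D) :
  annot_correct f -> annot_correct (alpha_l A B C D f).
Proof.
move=> IH n /=; have [Wf Hf] := IH n; split; first by rewrite addnA.
by move=> y x Hy Hx; rewrite /mxalpha mxcomp_idmr // Hf //= -catA.
Qed.

Lemma annot_correct_alpha_r A B C D (f : nld (Tens A (Tens B (Dia C))) D) :
  annot_correct f -> annot_correct (alpha_r A B C D f).
Proof.
move=> IH n /=; have [Wf Hf] := IH n; split; first by rewrite -addnA.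
by move=> y x Hy Hx; rewrite /mxalpha_inv mxcomp_idmr ?Hf //= catA.
Qed.

Lemma annot_correct_sigma_l A B C D (f : nld (Tens B (Tens (Dia A) C)) D) :
  annot_correct f -> annot_correct (sigma_l A B C D f).
Proof.
move=> IH n /=; case: (IH n); case: (annot f n) => s t u l m Hwf IHf.
case: (Hwf) => /= Hs Ht _ _ Hu _ _.
have [Mb [Q [Es HMb HQ]]] := cat_splitP Hs; subst s.
have [Ma [Mc [Eq HMa HMc]]] := cat_splitP HQ; subst Q.
rewrite [in drop (_ + _) _]catA !drop_size_cat ?size_cat ?HMb ?HMa //.
rewrite !take_size_cat //; split.
  by apply: (wf_annot_perm Hwf); rewrite ?size_cat ?Ht ?HMa ?HMb ?HMc //;
    (perm_by_count || lia).
move=> y x Hy Hx; have [a [x' [-> Ha Hx']]] := indices_catP Hx.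
have [b [c [-> Hb Hc]]] := indices_catP Hx'.
rewrite -!(size_sh d) sigma_l_entry // IHf //; last first.
  by rewrite /= !mem_indices_cat ?Ha ?Hb ?Hc ?(size_indices Ha) ?(size_indices Hb).
by solve_delta_perm.
Qed.

Lemma annot_correct_sigma_r A B C D (f : nld (Tens (Tens A (Dia C)) B) D) :
  annot_correct f -> annot_correct (sigma_r A B C D f).
Proof.
move=> IH n /=; case: (IH n); case: (annot f n) => s t u l m Hwf IHf.
case: (Hwf) => /= Hs Ht _ _ Hu _ _.
have [P [Mb [Es HP HMb]]] := cat_splitP Hs; subst s.
have [Ma [Mc [Ep HMa HMc]]] := cat_splitP HP; subst P.
rewrite -catA [in drop (_ + _) _]catA !drop_size_cat ?size_cat ?HMa ?HMc //.
rewrite !take_size_cat //; split.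
  by apply: (wf_annot_perm Hwf); rewrite ?size_cat ?Ht ?HMa ?HMb ?HMc //;
    (perm_by_count || lia).
move=> y x Hy Hx; rewrite -catA in Hx.
have [a [x' [-> Ha Hx']]] := indices_catP Hx.
have [b [c [-> Hb Hc]]] := indices_catP Hx'.
rewrite -!(size_sh d) sigma_r_entry // IHf //; last first.
  by rewrite /= -catA !mem_indices_cat ?Ha ?Hb ?Hc ?(size_indices Ha) ?(size_indices Hc).
by solve_delta_perm.
Qed.

Lemma nld_annot_correct X Y (f : nld X Y) : annot_correct f.
Proof.
elim: f =>
  [A|A B f IH|A B C f IH|A B C f IH|A B f IH|A B C f IH|A B C f IH
  |A B f IH|A B f IH|A B C D f IH g IH2|A B C D f IH g IH2|A B C D f IH g IH2
  |A B C D f IH|A B C D f IH|A B C D f IH|A B C D f IH].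
- exact: annot_correct_ax.
- exact: IH.
- exact: annot_correct_rres.
- exact: annot_correct_lres.
- exact: IH.
- exact: annot_correct_rres_inv.
- exact: annot_correct_lres_inv.
- exact: IH.
- exact: IH.
- exact: annot_correct_mtens.
- exact: annot_correct_mslash.
- exact: annot_correct_mbslash.
- exact: annot_correct_alpha_l.
- exact: annot_correct_sigma_l.
- exact: annot_correct_alpha_r.
- exact: annot_correct_sigma_r.
Qed.
End Correctness.

Theorem mainTheorem1 (R : realType) (atom : Type) (d : atom -> nat)
    (A B : fml atom) (f : nld A B) :
  mx_eq (sh d A) (sh d B) (interp R d f) (Gmap R f).
Proof. exact: (nld_annot_correct R d f 0).2. Qed.
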